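(* Let $d\ge 2$ be an integer, let $\alpha_0,\alpha_{d+1},\beta_0,\beta_{d+1}\in\mathbb R$ and $\mathbf a,\mathbf b\in\mathbb R^d$. Define the symmetric $(d+1)\times(d+1)$ matrices $$A=\begin{pmatrix}\alpha_0\,\mathrm{Id}_d & -2\mathbf a\\ -2\mathbf a^T & 2\alpha_{d+1}\end{pmatrix},\qquad B=\begin{pmatrix}\beta_0\,\mathrm{Id}_d & -2\mathbf b\\ -2\mathbf b^T & 2\beta_{d+1}\end{pmatrix},$$ where $\mathrm{Id}_d$ is the $d\times d$ identity matrix, and assume that $A$ is positive definite. Set $$\Delta=\big(4\,\mathbf a^T\mathbf b-(\beta_{d+1}\alpha_0+\beta_0\alpha_{d+1})\big)^2-4\big(2\Vert\mathbf a\Vert^2-\alpha_0\alpha_{d+1}\big)\big(2\Vert\mathbf b\Vert^2-\beta_0\beta_{d+1}\big).$$ Then $\Delta\ge 0$, $4\Vert\mathbf a\Vert^2-2\alpha_0\alpha_{d+1}\neq 0$, and, with $$\lambda_\pm=\frac{\big(-4\,\mathbf a^T\mathbf b+(\beta_{d+1}\alpha_0+\beta_0\alpha_{d+1})\big)\pm\sqrt{\Delta}}{4\Vert\mathbf a\Vert^2-2\alpha_0\alpha_{d+1}},$$ one has $$\max_{\mathbf z\in\mathbb R^{d+1}\setminus\{0\}}\frac{\vert\mathbf z^TB\mathbf z\vert}{\mathbf z^TA\mathbf z}=\rho\big(A^{-1/2}BA^{-1/2}\big)=\max\Big(\frac{\vert\beta_0\vert}{\alpha_0},\ \vert\lambda_+\vert,\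 \vert\lambda_-\vert\Big),$$ where $\rho(\cdot)$ denotes the spectral radius and $A^{-1/2}$ is the inverse of the symmetric positive definite square root of $A$.
   Context: $\Vert\cdot\Vert$ is the Euclidean norm on $\mathbb R^d$. This computation is used to determine the blending coefficients guaranteeing positivity of internal energy in a bound-preserving scheme for the Euler equations, via the ratio $\vert(\Delta\hat{\mathbf f})^T\psi(\mathbf w)\vert/(\mathbf u^{\star})^T\psi(\mathbf w)$ with $\psi(\mathbf w)=(\tfrac{\Vert\mathbf w\Vert^2}{2},-\mathbf w,1)$, after homogenizing $\mathbf w\mapsto\mathbf w/w_{d+1}$ and setting $\mathbf z=(\mathbf w,w_{d+1})$. *)

From HB Require Import structures.
From mathcomp Require Import all_boot all_order all_algebra.
From mathcomp Require Import complex.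
Set Implicit Arguments. Unset Strict Implicit. Unset Printing Implicit Defensive.
Import Order.TTheory GRing.Theory Num.Theory.
Local Open Scope ring_scope.

Definition dotv (R : rcfType) (d : nat) (u v : 'cV[R]_d) : R :=
  \sum_(i < d) u i 0 * v i 0.

Definition qform (R : rcfType) (n : nat) (M : 'M[R]_n) (z : 'cV[R]_n) : R :=
  (z^T *m M *m z) 0 0.

Definition posdef (R : rcfType) (n : nat) (M : 'M[R]_n) : Prop :=
  M^T = M /\ forall z : 'cV[R]_n, z != 0 -> 0 < qform M z.

Definition is_spd_sqrt (R : rcfType) (n : nat) (A S : 'M[R]_n) : Prop :=
  posdef S /\ S *m S = A.

Definition blockM (R : rcfType) (d : nat) (c0 c1 : R) (v : 'cV[R]_d)
  : 'M[R]_(d + 1) :=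
  block_mx (c0%:M) (- (2 : R) *: v) (- (2 : R) *: v^T) ((2 * c1)%:M).

Definition is_max_ratio (R : rcfType) (n : nat) (A B : 'M[R]_n) (m : R) : Prop :=
  (exists2 z : 'cV[R]_n, z != 0 & `|qform B z| / qform A z = m) /\
  (forall z : 'cV[R]_n, z != 0 -> `|qform B z| / qform A z <= m).

Definition is_spectral_radius (R : rcfType) (n : nat) (M : 'M[R]_n) (r : R)
  : Prop :=
  let MC := map_mx (fun x : R => (x%:C)%C) M in
  (exists2 l : R[i], eigenvalue MC l & `|l| = (r%:C)%C) /\
  (forall l : R[i], eigenvalue MC l -> `|l| <= (r%:C)%C).

(* A and B are arrowhead matrices M(c0, c1, v) = [[c0 I, -2 v], [-2 v^T, 2 c1]],
   and so is every B - x A.  For z = (u, t) one has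
   c0 z^T M z = |c0 u - 2 t v|^2 + D t^2 with D = 2 c0 c1 - 4 |v|^2, so M is
   positive definite iff c0 > 0 and D > 0; and for d >= 2, M is singular iff
   c0 = 0 or D = 0.  For M = B - x A, D is the quadratic
   -den (x + lambda_+) (x + lambda_-), whose discriminant is Delta, so the
   eigenvalues of the pencil (B, A) are beta0/alpha0, -lambda_+ and -lambda_-.
   For mu > m both mu A - B and mu A + B are positive semidefinite, which bounds
   the ratio by m, and a kernel vector of B - r A with |r| = m attains it.  If
   S^2 = A then S^-1 B S^-1 - l = S^-1 (B - l A) S^-1, so its complex eigenvalues
   are the same three numbers.  A square root of A is found explicitly among the
   matrices [[p I + q v v^T, r v], [r v^T, w]]. *)

From HB Require Import structures.
From mathcomp Require Import all_boot all_order all_algebra.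
From mathcomp Require Import complex.
From mathcomp.algebra_tactics Require Import ring lra.
Import Order.TTheory GRing.Theory Num.Theory.
Local Open Scope ring_scope.

Set Implicit Arguments. Unset Strict Implicit. Unset Printing Implicit Defensive.

Section Arrow.
Variable K : comNzRingType.

(* [vdot] and [arrowmx] are [dotv] and [blockM] over any commutative ring: the
   spectral part of the argument takes place over R[i]. *)
Definition vdot n (u v : 'cV[K]_n) : K := \sum_(i < n) u i 0 * v i 0.

Lemma vdotE n (u v : 'cV[K]_n) : vdot u v = (u^T *m v) 0 0.
Proof. by rewrite mxE; apply: eq_bigr => i _; rewrite mxE. Qed.

Lemma vdotC n (u v : 'cV[K]_n) : vdot u v = vdot v u.
Proof. by apply: eq_bigr => i _; rewrite mulrC. Qed.

Lemma vdot0l n (u : 'cV[K]_n) : vdot 0 u = 0.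
Proof. by apply: big1 => i _; rewrite mxE mul0r. Qed.

Lemma vdot0r n (u : 'cV[K]_n) : vdot u 0 = 0.
Proof. by rewrite vdotC vdot0l. Qed.

Lemma vdotDl n (u v w : 'cV[K]_n) : vdot (u + v) w = vdot u w + vdot v w.
Proof. by rewrite -big_split; apply: eq_bigr => i _; rewrite mxE mulrDl. Qed.

Lemma vdotZl n k (u w : 'cV[K]_n) : vdot (k *: u) w = k * vdot u w.
Proof. by rewrite mulr_sumr; apply: eq_bigr => i _; rewrite mxE mulrA. Qed.

Lemma vdotNl n (u w : 'cV[K]_n) : vdot (- u) w = - vdot u w.
Proof. by rewrite -scaleN1r vdotZl mulN1r. Qed.

Lemma vdotDr n (u v w : 'cV[K]_n) : vdot w (u + v) = vdot w u + vdot w v.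
Proof. by rewrite vdotC vdotDl !(vdotC w). Qed.

Lemma vdotZr n k (u w : 'cV[K]_n) : vdot w (k *: u) = k * vdot w u.
Proof. by rewrite vdotC vdotZl vdotC. Qed.

Lemma vdotNr n (u w : 'cV[K]_n) : vdot w (- u) = - vdot w u.
Proof. by rewrite vdotC vdotNl vdotC. Qed.

Definition vdot_lin := (vdotDl, vdotDr, vdotNl, vdotNr, vdotZl, vdotZr).

Definition arrowmx d (c0 c1 : K) (v : 'cV[K]_d) : 'M[K]_(d + 1) :=
  block_mx c0%:M (- 2 *: v) (- 2 *: v^T) (2 * c1)%:M.

Definition arrow_disc d (c0 c1 : K) (v : 'cV[K]_d) : K := 2 * c0 * c1 - 4 * vdot v v.

Lemma arrowmxBZ d (c0 c1 : K) (v : 'cV[K]_d) (c0' c1' : K) v' (k : K) :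
  arrowmx c0 c1 v - k *: arrowmx c0' c1' v' =
  arrowmx (c0 - k * c0') (c1 - k * c1') (v - k *: v').
Proof.
rewrite /arrowmx scale_block_mx opp_block_mx add_block_mx.
by congr block_mx; apply/matrixP => i j; rewrite !mxE; ring.
Qed.

(* The square root of [arrowmx c0 c1 v] is sought among matrices of this shape. *)
Definition arrowmx_vv d (p q r w : K) (v : 'cV[K]_d) : 'M[K]_(d + 1) :=
  block_mx (p%:M + q *: (v *m v^T)) (r *: v) (r *: v^T) w%:M.

Lemma arrowmx_vvE d (c0 c1 : K) (v : 'cV[K]_d) :
  arrowmx c0 c1 v = arrowmx_vv c0 0 (- 2) (2 * c1) v.
Proof. by rewrite /arrowmx_vv scale0r addr0. Qed.

Lemma tr_arrowmx_vv d p q r w (v : 'cV[K]_d) :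
  (arrowmx_vv p q r w v)^T = arrowmx_vv p q r w v.
Proof. by rewrite tr_block_mx !linearD !linearZ /= trmx_mul !trmxK !tr_scalar_mx. Qed.

Lemma arrowmx_vv_sqr d p q r w (v : 'cV[K]_d) :
  let n := vdot v v in
  arrowmx_vv p q r w v *m arrowmx_vv p q r w v =
  arrowmx_vv (p * p) (2 * p * q + q * q * n + r * r) (r * (p + q * n + w))
             (r * r * n + w * w) v.
Proof.
have vTv : v^T *m v = (vdot v v)%:M by rewrite vdotE -mx11_scalar.
rewrite /arrowmx_vv mulmx_block.
do ![rewrite mulmxDl | rewrite mulmxDr | rewrite mul_scalar_mx | rewrite mul_mx_scalar
     | rewrite -scalemxAl | rewrite -scalemxAr].
rewrite !mulmxA -[v *m v^T *m v]mulmxA vTv mul_mx_scalar.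
rewrite mul_scalar_mx -!scalemxAl; set M := v *m v^T.
by congr block_mx; apply/matrixP => i j; rewrite !mxE;
  try case: (_ == _); rewrite ?mulr1n ?mulr0n; ring.
Qed.

Lemma form_arrowmx_vv d p q r w (v u : 'cV[K]_d) (t : 'cV[K]_1) :
  ((col_mx u t)^T *m arrowmx_vv p q r w v *m col_mx u t) 0 0 =
  p * vdot u u + q * vdot v u ^+ 2 + 2 * r * t 0 0 * vdot v u + w * t 0 0 ^+ 2.
Proof.
have uv (x y : 'cV[K]_d) : x^T *m y = (vdot x y)%:M by rewrite vdotE -mx11_scalar.
rewrite tr_col_mx /arrowmx_vv mul_row_block mul_row_col.
do ![rewrite mulmxDl | rewrite mulmxDr | rewrite mul_scalar_mx | rewrite mul_mx_scalar
     | rewrite -scalemxAl | rewrite -scalemxAr].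
rewrite !mulmxA -(mulmxA (u^T *m v)) -(mulmxA t^T) !uv !mul_scalar_mx [vdot u v]vdotC.
rewrite !mxE !big_ord1 !mxE !eqxx /= !mulr1n; ring.
Qed.

Lemma form_arrowmx d c0 c1 (v u : 'cV[K]_d) (t : 'cV[K]_1) :
  ((col_mx u t)^T *m arrowmx c0 c1 v *m col_mx u t) 0 0 =
  c0 * vdot u u - 4 * t 0 0 * vdot v u + 2 * c1 * t 0 0 ^+ 2.
Proof. by rewrite arrowmx_vvE form_arrowmx_vv; ring. Qed.

Lemma mul_form_arrowmx d c0 c1 (v u : 'cV[K]_d) (t : 'cV[K]_1) :
  c0 * ((col_mx u t)^T *m arrowmx c0 c1 v *m col_mx u t) 0 0 =
  vdot (c0 *: u - (2 * t 0 0) *: v) (c0 *: u - (2 * t 0 0) *: v)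
  + arrow_disc c0 c1 v * t 0 0 ^+ 2.
Proof. by rewrite form_arrowmx /arrow_disc !vdot_lin (vdotC u v); ring. Qed.

Lemma mul_row_arrowmx d c0 c1 (v : 'cV[K]_d) (w : 'rV[K]_d) (t : 'rV[K]_1) :
  row_mx w t *m arrowmx c0 c1 v =
  row_mx (c0 *: w - (2 * t 0 0) *: v^T) (- 2 * vdot w^T v + 2 * c1 * t 0 0)%:M.
Proof.
rewrite /arrowmx mul_row_block mul_mx_scalar {1 2}[t]mx11_scalar !mul_scalar_mx.
rewrite -scalemxAr vdotE trmxK scalerA; congr row_mx.
  by rewrite -scaleNr mulrN mulrC.
by apply/matrixP => i j; rewrite !ord1 !mxE eqxx !mulr1n (mulrC (t 0 0)).
Qed.

End Arrow.

Lemma vdot_map (K K' : comNzRingType) (f : {rmorphism K -> K'}) n (u v : 'cV[K]_n) :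
  vdot (map_mx f u) (map_mx f v) = f (vdot u v).
Proof. by rewrite rmorph_sum; apply: eq_bigr => i _; rewrite !mxE rmorphM. Qed.

Lemma map_arrowmx (K K' : comNzRingType) (f : {rmorphism K -> K'}) d (c0 c1 : K)
    (v : 'cV[K]_d) :
  map_mx f (arrowmx c0 c1 v) = arrowmx (f c0) (f c1) (map_mx f v).
Proof.
rewrite /arrowmx map_block_mx !map_mxZ !map_scalar_mx map_trmx.
by rewrite rmorphM rmorphN rmorph_nat.
Qed.

Lemma unitmxPn (F : fieldType) n (M : 'M[F]_n) :
  reflect (exists2 u : 'rV_n, u != 0 & u *m M = 0) (M \notin unitmx).
Proof.
rewrite -row_free_unit -kermx_eq0; apply: (iffP rowV0Pn).
  by case=> u /sub_kermxP uM u0; exists u.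
by case=> u u0 uM; exists u => //; apply/sub_kermxP.
Qed.

Section ArrowField.
Variables (F : fieldType) (d : nat).

Lemma arrowmx_kernel c0 c1 (v : 'cV[F]_d) (u : 'rV[F]_(d + 1)) :
  u != 0 -> u *m arrowmx c0 c1 v = 0 -> c0 = 0 \/ arrow_disc c0 c1 v = 0.
Proof.
rewrite -(hsubmxK u) mul_row_arrowmx => u_neq0 /eqP.
rewrite row_mx_eq0 => /andP[/eqP wE /eqP tE].
set w := lsubmx u in u_neq0 wE tE; set t := rsubmx u in u_neq0 tE wE.
have [->|c0_neq0] := eqVneq c0 0; [by left | right].
have {}wE : c0 *: w = (2 * t 0 0) *: v^T by apply/eqP; rewrite -subr_eq0 wE.
have {}tE : - 2 * vdot w^T v + 2 * c1 * t 0 0 = 0.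
  by move/matrixP: tE => /(_ 0 0); rewrite !mxE eqxx mulr1n.
have t_disc : t 0 0 * arrow_disc c0 c1 v = 0.
  have wv : c0 * vdot w^T v = 2 * t 0 0 * vdot v v.
    by rewrite -vdotZl -linearZ /= wE linearZ /= trmxK vdotZl.
  transitivity (c0 * (- 2 * vdot w^T v + 2 * c1 * t 0 0)
                + 2 * (c0 * vdot w^T v - 2 * t 0 0 * vdot v v)).
    by rewrite /arrow_disc; ring.
  by rewrite tE wv subrr; ring.
have [t0|] := eqVneq (t 0 0) 0; last by move/mulfI; apply; rewrite t_disc mulr0.
have t_eq0 : t = 0 by rewrite [t]mx11_scalar t0 raddf0.
have /eqP : c0 *: w = 0 by rewrite wE t0 mulr0 scale0r.
rewrite scalemx_eq0 (negbTE c0_neq0) /= => /eqP w_eq0.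
by move: u_neq0; rewrite t_eq0 w_eq0 row_mx0 eqxx.
Qed.

Lemma arrowmx_unitmx c0 c1 (v : 'cV[F]_d) : (2 <= d)%N ->
  (arrowmx c0 c1 v \in unitmx) = (c0 != 0) && (arrow_disc c0 c1 v != 0).
Proof.
move=> d_ge2; apply/idP/andP => [unitM | [c0_neq0 disc_neq0]]; last first.
  by apply/negPn/unitmxPn => -[u u_neq0 /(arrowmx_kernel u_neq0)[]] /eqP; apply/negP.
have [c0_eq0|c0_neq0] := eqVneq c0 0.
  have /rowV0Pn[w /sub_kermxP wv w_neq0] : kermx v != 0.
    rewrite kermx_eq0 /row_free; apply: contraTneq d_ge2 => <-.
    by rewrite -ltnNge; exact: rank_leq_col.
  suff : arrowmx c0 c1 v \notin unitmx by rewrite unitM.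
  apply/unitmxPn; exists (row_mx w 0); first by rewrite row_mx_eq0 negb_and w_neq0.
  rewrite mul_row_arrowmx vdotE trmxK wv c0_eq0 !mxE.
  by rewrite !(scale0r, mulr0, mul0r, subr0, addr0, raddf0) row_mx0.
split => //; apply: contraTneq unitM => disc_eq0; apply/unitmxPn.
exists (row_mx (2 *: v^T) c0%:M).
  rewrite row_mx_eq0 negb_and; apply/orP; right; apply: contra c0_neq0.
  by move/eqP/matrixP/(_ 0 0)/eqP; rewrite !mxE eqxx mulr1n.
rewrite mul_row_arrowmx mxE eqxx mulr1n scalerA mulrC subrr linearZ /= trmxK.
have -> : - 2 * vdot (2 *: v) v + 2 * c1 * c0 = arrow_disc c0 c1 v.
  by rewrite /arrow_disc vdotZl; ring.
by rewrite disc_eq0 raddf0 row_mx0.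
Qed.

End ArrowField.

Section Pencil.
Variables (F : fieldType) (d : nat) (alpha0 alpha1 beta0 beta1 : F) (a b : 'cV[F]_d).

Definition pencil_mid := - 4 * vdot a b + (beta1 * alpha0 + beta0 * alpha1).
Definition pencil_den := 4 * vdot a a - 2 * alpha0 * alpha1.
Definition pencil_Delta := (4 * vdot a b - (beta1 * alpha0 + beta0 * alpha1)) ^+ 2
  - 4 * (2 * vdot a a - alpha0 * alpha1) * (2 * vdot b b - beta0 * beta1).
Definition pencil_root s := (pencil_mid + s) / pencil_den.

Lemma pencil_denE : pencil_den = - arrow_disc alpha0 alpha1 a.
Proof. by rewrite /pencil_den /arrow_disc; ring. Qed.

Lemma pencil_disc_sq x :
  - pencil_den * arrow_disc (beta0 - x * alpha0) (beta1 - x * alpha1) (b - x *: a)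
  = (pencil_den * x + pencil_mid) ^+ 2 - pencil_Delta.
Proof.
by rewrite /arrow_disc !vdot_lin (vdotC b a) /pencil_den /pencil_mid /pencil_Delta; ring.
Qed.

Hypotheses (den_neq0 : pencil_den != 0) (alpha0_neq0 : alpha0 != 0).

Lemma pencil_disc_factor s x : s ^+ 2 = pencil_Delta ->
  arrow_disc (beta0 - x * alpha0) (beta1 - x * alpha1) (b - x *: a)
  = - pencil_den * (x + pencil_root s) * (x + pencil_root (- s)).
Proof.
move=> sE; apply: (mulfI (_ : - pencil_den != 0)); first by rewrite oppr_eq0.
by rewrite pencil_disc_sq -sE /pencil_root; field.
Qed.

Lemma pencil_singular (hd : (2 <= d)%N) s x : s ^+ 2 = pencil_Delta ->
  (arrowmx beta0 beta1 b - x *: arrowmx alpha0 alpha1 a \notin unitmx) =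
  (x \in [:: beta0 / alpha0; - pencil_root s; - pencil_root (- s)]).
Proof.
move=> sE; rewrite arrowmxBZ arrowmx_unitmx // (pencil_disc_factor _ sE).
rewrite !inE !mulf_eq0 oppr_eq0 (negbTE den_neq0) subr_eq0 !addr_eq0 /=.
by rewrite negb_and !negbK eq_sym -(can2_eq (mulfK alpha0_neq0) (divfK alpha0_neq0)).
Qed.

End Pencil.

Section PencilMap.
Variables (F F' : fieldType) (f : {rmorphism F -> F'}) (d : nat).
Variables (alpha0 alpha1 beta0 beta1 : F) (a b : 'cV[F]_d).

Let fa := map_mx f a.
Let fb := map_mx f b.

Lemma pencil_den_map :
  pencil_den (f alpha0) (f alpha1) fa = f (pencil_den alpha0 alpha1 a).
Proof. by rewrite /pencil_den vdot_map !(rmorph_nat, rmorphB, rmorphM). Qed.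

Lemma pencil_Delta_map :
  pencil_Delta (f alpha0) (f alpha1) (f beta0) (f beta1) fa fb
  = f (pencil_Delta alpha0 alpha1 beta0 beta1 a b).
Proof.
by rewrite /pencil_Delta !vdot_map !(rmorph_nat, rmorphXn, rmorphB, rmorphD, rmorphM).
Qed.

Lemma pencil_root_map s :
  pencil_root (f alpha0) (f alpha1) (f beta0) (f beta1) fa fb (f s)
  = f (pencil_root alpha0 alpha1 beta0 beta1 a b s).
Proof.
rewrite /pencil_root fmorph_div pencil_den_map /pencil_mid !vdot_map.
by rewrite !(rmorph_nat, rmorphD, rmorphM, rmorphN).
Qed.

End PencilMap.

Lemma eigenvalue_invmx_sandwich (F : fieldType) n (S B : 'M[F]_n) l :
  S \in unitmx ->
  eigenvalue (invmx S *m B *m invmx S) l = (B - l *: (S *m S) \notin unitmx).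
Proof.
move=> S_unit; rewrite /eigenvalue /eigenspace kermx_eq0 row_free_unit.
have -> : invmx S *m B *m invmx S - l%:M = invmx S *m (B - l *: (S *m S)) *m invmx S.
  by rewrite mulmxBr mulmxBl -scalemxAr -scalemxAl mulmxA mulVmx // mul1mx mulmxV // scalemx1.
by rewrite !unitmx_mul unitmx_inv S_unit andbT.
Qed.

Section RealVdot.
Variables (R : realDomainType) (n : nat).
Implicit Types u v : 'cV[R]_n.

Lemma vdot_ge0 u : 0 <= vdot u u.
Proof. by apply: sumr_ge0 => i _; rewrite -expr2 sqr_ge0. Qed.

Lemma vdot_eq0 u : (vdot u u == 0) = (u == 0).
Proof.
rewrite psumr_eq0 => [|i _]; last by rewrite -expr2 sqr_ge0.
apply/allP/eqP => [u0|u0 i _]; last by rewrite u0 mxE mul0r eqxx.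
apply/matrixP => i j; rewrite ord1 mxE.
by apply/eqP; rewrite -sqrf_eq0 expr2; exact: implyP (u0 i (mem_index_enum i)) isT.
Qed.

Lemma vdot_gt0 u : (0 < vdot u u) = (u != 0).
Proof. by rewrite lt_def vdot_ge0 vdot_eq0 andbT. Qed.

Lemma vdot_CS u v : vdot u v ^+ 2 <= vdot u u * vdot v v.
Proof.
have [v0|v_neq0] := eqVneq v 0.
  by rewrite v0 vdot0l vdot0r expr0n mulr0.
rewrite -subr_ge0 -(pmulr_rge0 _ (_ : 0 < vdot v v)) ?vdot_gt0 //.
have -> : vdot v v * (vdot u u * vdot v v - vdot u v ^+ 2) =
    vdot (vdot v v *: u - vdot u v *: v) (vdot v v *: u - vdot u v *: v).
  by rewrite !vdot_lin (vdotC v u); ring.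
exact: vdot_ge0.
Qed.

End RealVdot.

(* On span{(v, 0), (0, 1)} the arrowhead matrix acts as the 2x2 block
   M = [[c0, -2|v|], [-2|v|, 2 c1]], whose square root is
   (M + s) / t with s = sqrt (det M) and t = sqrt (tr M + 2 s); on the
   orthogonal complement it acts as c0, with square root x = sqrt c0.  The
   coefficient y solves x + y |v|^2 = (c0 + s) / t, in a form that does not
   divide by |v|^2. *)
Lemma arrow_sqrt_coeffs (F : numFieldType) (c0 c1 n x s t : F) :
  t != 0 -> t * x + c0 + s != 0 ->
  x ^+ 2 = c0 -> t ^+ 2 = c0 + 2 * c1 + 2 * s -> s ^+ 2 = 2 * c0 * c1 - 4 * n ->
  let y := - 4 / (t * (t * x + c0 + s)) in
  let z := - 2 / t in
  let w := (2 * c1 + s) / t in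
  [/\ 2 * x * y + y * y * n + z * z = 0, z * (x + y * n + w) = - 2,
       z * z * n + w * w = 2 * c1 &
       forall U p r, t * (x * U + y * p ^+ 2 + 2 * z * r * p + w * r ^+ 2) =
         (c0 * U - 4 * r * p + 2 * c1 * r ^+ 2) + s * (U + r ^+ 2)
         + t * (- y) * (n * U - p ^+ 2)].
Proof.
move=> t_neq0 D_neq0 xE tE sE y z w.
have c1E : c1 = (t ^+ 2 - x ^+ 2 - 2 * s) / 2 by rewrite tE -xE; field.
have nE : n = (2 * c0 * c1 - s ^+ 2) / 4 by rewrite sE; field.
rewrite /y /z /w nE c1E -xE; rewrite -xE in D_neq0.
by split=> [||| U p r]; field; rewrite ?D_neq0 ?t_neq0.
Qed.

Section ArrowReal.
Variables (R : rcfType) (d : nat).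

Lemma qformBZ n (M N : 'M[R]_n) k z : qform (M - k *: N) z = qform M z - k * qform N z.
Proof.
by rewrite /qform mulmxBr mulmxBl -scalemxAr -scalemxAl !mxE.
Qed.

Lemma qform_arrowmx_sign (c0 c1 : R) (v : 'cV[R]_d) z :
  0 <= arrow_disc c0 c1 v -> 0 <= c0 * qform (arrowmx c0 c1 v) z.
Proof.
move=> disc_ge0; rewrite -(vsubmxK z) /qform mul_form_arrowmx.
by rewrite addr_ge0 ?vdot_ge0 // mulr_ge0 // sqr_ge0.
Qed.

Lemma posdef_arrowmx (c0 c1 : R) (v : 'cV[R]_d) : (0 < d)%N ->
  posdef (arrowmx c0 c1 v) -> 0 < c0 /\ 0 < arrow_disc c0 c1 v.
Proof.
move=> d_gt0 [_ A_pos].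
have c0_gt0 : 0 < c0.
  pose u : 'cV[R]_d := const_mx 1.
  have u_gt0 : 0 < vdot u u.
    rewrite vdot_gt0; apply/negP => /eqP/matrixP/(_ (Ordinal d_gt0) 0)/eqP.
    by rewrite !mxE oner_eq0.
  have /A_pos : col_mx u (0 : 'cV[R]_1) != 0.
    by rewrite col_mx_eq0 negb_and -vdot_gt0 u_gt0.
  by rewrite /qform form_arrowmx mxE expr0n /= !(mulr0, mul0r, subr0, addr0) pmulr_lgt0.
split=> //.
have /A_pos : col_mx (2 *: v) (c0%:M : 'cV[R]_1) != 0.
  rewrite col_mx_eq0 negb_and; apply/orP; right; apply/negP.
  by move/eqP/matrixP/(_ 0 0)/eqP; rewrite !mxE eqxx mulr1n gt_eqF.
rewrite -(pmulr_rgt0 _ c0_gt0) /qform mul_form_arrowmx mxE eqxx mulr1n.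
by rewrite scalerA mulrC subrr vdot0l add0r pmulr_lgt0 // exprn_gt0.
Qed.

Lemma arrowmx_posdef (c0 c1 : R) (v : 'cV[R]_d) :
  0 < c0 -> 0 < arrow_disc c0 c1 v -> posdef (arrowmx c0 c1 v).
Proof.
move=> c0_gt0 disc_gt0; split; first by rewrite arrowmx_vvE tr_arrowmx_vv.
move=> z; rewrite -(pmulr_rgt0 _ c0_gt0) lt_def qform_arrowmx_sign ?ltW // andbT.
rewrite -(vsubmxK z) /qform mul_form_arrowmx; set u := usubmx z; set t := dsubmx z.
have disc_t_ge0 : 0 <= arrow_disc c0 c1 v * t 0 0 ^+ 2 by rewrite mulr_ge0 ?sqr_ge0 ?ltW.
apply: contraNneq => /eqP; rewrite paddr_eq0 ?vdot_ge0 //.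
rewrite vdot_eq0 mulf_eq0 (gt_eqF disc_gt0) sqrf_eq0 /= => /andP[/eqP cuE t0].
have t_eq0 : t = 0 by rewrite [t]mx11_scalar (eqP t0) raddf0.
move: cuE; rewrite t_eq0 mxE mulr0 scale0r subr0 => /eqP.
by rewrite scalemx_eq0 (gt_eqF c0_gt0) /= => /eqP ->; rewrite col_mx0 eqxx.
Qed.

Lemma posdef_unitmx n (S : 'M[R]_n) : posdef S -> S \in unitmx.
Proof.
case=> _ S_pos; apply/negPn/negP => /unitmxPn[u u_neq0 uS].
have := S_pos u^T; rewrite trmx_eq0 => /(_ u_neq0).
by rewrite /qform trmxK uS mul0mx mxE ltxx.
Qed.

Lemma arrowmx_spd_sqrt (c0 c1 : R) (v : 'cV[R]_d) :
  0 < c0 -> 0 < arrow_disc c0 c1 v -> exists S, is_spd_sqrt (arrowmx c0 c1 v) S.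
Proof.
move=> c0_gt0 disc_gt0; have [_ A_pos] := arrowmx_posdef c0_gt0 disc_gt0.
have n_ge0 := vdot_ge0 v; set n := vdot v v in n_ge0.
set s := Num.sqrt (arrow_disc c0 c1 v); set x := Num.sqrt c0.
have s_gt0 : 0 < s by rewrite sqrtr_gt0.
have x_gt0 : 0 < x by rewrite sqrtr_gt0.
have c1_gt0 : 0 < c1.
  by move: disc_gt0; rewrite /arrow_disc -/n; nra.
set t := Num.sqrt (c0 + 2 * c1 + 2 * s).
have t_gt0 : 0 < t by rewrite sqrtr_gt0; lra.
have D_gt0 : 0 < t * x + c0 + s by nra.
have xE : x ^+ 2 = c0 by rewrite sqr_sqrtr // ltW.
have tE : t ^+ 2 = c0 + 2 * c1 + 2 * s by rewrite sqr_sqrtr //; lra.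
have sE : s ^+ 2 = 2 * c0 * c1 - 4 * n by rewrite sqr_sqrtr // ltW.
have [yE zE wE formE] :=
  arrow_sqrt_coeffs (lt0r_neq0 t_gt0) (lt0r_neq0 D_gt0) xE tE sE.
set y := - 4 / _ in yE zE wE formE; set z := - 2 / t in yE zE wE formE.
set w := (2 * c1 + s) / t in yE zE wE formE.
have ny_gt0 : 0 < - y by rewrite /y mulNr opprK divr_gt0 // mulr_gt0.
exists (arrowmx_vv x y z w v); split; last first.
  by rewrite arrowmx_vv_sqr -/n yE zE wE -expr2 xE arrowmx_vvE.
split=> [|q]; first exact: tr_arrowmx_vv.
rewrite -(vsubmxK q) => /A_pos; rewrite /qform form_arrowmx form_arrowmx_vv.
have CS := vdot_CS v (usubmx q); have U_ge0 := vdot_ge0 (usubmx q).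
set U := vdot (usubmx q) _ in CS U_ge0 *; set p := vdot v _ in CS *.
set r := _ 0 0 => A_gt0; rewrite -(pmulr_rgt0 _ t_gt0) formE.
have : 0 <= s * (U + r ^+ 2).
  by apply: mulr_ge0; [exact: ltW | rewrite addr_ge0 ?sqr_ge0].
have : 0 <= t * - y * (n * U - p ^+ 2).
  by apply: mulr_ge0; [rewrite mulr_ge0 ?ltW | rewrite subr_ge0].
lra.
Qed.

End ArrowReal.

(* Delta is, up to a positive factor, the discriminant of the quadratic
   x |-> arrow_disc (B - x A), which has a positive leading coefficient and is
   nonpositive at x = beta0 / alpha0. *)
Lemma pencil_Delta_ge0 (R : realFieldType) d (alpha0 alpha1 beta0 beta1 : R)
    (a b : 'cV[R]_d) :
  0 < alpha0 -> 0 < arrow_disc alpha0 alpha1 a ->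
  0 <= pencil_Delta alpha0 alpha1 beta0 beta1 a b.
Proof.
move=> alpha0_gt0 disc_gt0.
have := pencil_disc_sq alpha0 alpha1 beta0 beta1 a b (beta0 / alpha0).
rewrite divfK ?lt0r_neq0 // subrr /arrow_disc pencil_denE /arrow_disc.
set V := vdot (b - _) _; have V_ge0 : 0 <= V := vdot_ge0 _.
set S := (_ + pencil_mid _ _ _ _ _ _) ^+ 2; have S_ge0 : 0 <= S := sqr_ge0 _.
have := mulr_ge0 (ltW disc_gt0) V_ge0; rewrite /arrow_disc.
lra.
Qed.

Lemma mul_addr_gt0 (R : realDomainType) (x p q : R) :
  `|p| < `|x| -> `|q| < `|x| -> 0 < (x + p) * (x + q).
Proof.
rewrite !ltr_norml; have [x_ge0|x_lt0] := leP 0 x.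
  by rewrite ger0_norm // => /andP[p1 p2] /andP[q1 q2]; nra.
by rewrite ltr0_norm // => /andP[p1 p2] /andP[q1 q2]; nra.
Qed.

Lemma normC_real (R : rcfType) (x : R) : `|(x%:C)%C| = (`|x|%:C)%C.
Proof. by rewrite normc_def /= expr0n addr0 sqrtr_sqr. Qed.

Section RealPencil.
Variables (R : rcfType) (d : nat) (alpha0 alpha1 beta0 beta1 : R) (a b : 'cV[R]_d).
Hypotheses (d_ge2 : (2 <= d)%N) (A_posdef : posdef (arrowmx alpha0 alpha1 a)).

Local Notation A := (arrowmx alpha0 alpha1 a).
Local Notation B := (arrowmx beta0 beta1 b).
Local Notation Delta := (pencil_Delta alpha0 alpha1 beta0 beta1 a b).
Local Notation root := (pencil_root alpha0 alpha1 beta0 beta1 a b).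
Local Notation lp := (root (Num.sqrt Delta)).
Local Notation lm := (root (- Num.sqrt Delta)).
Local Notation m := (Num.max (`|beta0| / alpha0) (Num.max `|lp| `|lm|)).
Local Notation roots := [:: beta0 / alpha0; - lp; - lm].

Let A_cond := posdef_arrowmx (ltnW d_ge2) A_posdef.
Let alpha0_gt0 : 0 < alpha0 := A_cond.1.
Let disc_gt0 : 0 < arrow_disc alpha0 alpha1 a := A_cond.2.
Let den_neq0 : pencil_den alpha0 alpha1 a != 0.
Proof. by rewrite pencil_denE oppr_eq0 lt0r_neq0. Qed.
Let Delta_ge0 : 0 <= Delta := pencil_Delta_ge0 beta0 beta1 b alpha0_gt0 disc_gt0.
Let sqrt_DeltaE : Num.sqrt Delta ^+ 2 = Delta := sqr_sqrtr Delta_ge0.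

Lemma pencil_roots_norm_le x : x \in roots -> `|x| <= m.
Proof.
rewrite !inE => /or3P[] /eqP ->; rewrite ?normrN ?le_max ?lexx ?orbT //.
by rewrite normrM normfV (gtr0_norm alpha0_gt0) lexx.
Qed.

Lemma pencil_roots_norm_max : exists2 r, r \in roots & `|r| = m.
Proof.
have [_|_] := leP (Num.max `|lp| `|lm|) (`|beta0| / alpha0).
  exists (beta0 / alpha0); first by rewrite inE eqxx.
  by rewrite normrM normfV (gtr0_norm alpha0_gt0).
have [_|_] := leP `|lp| `|lm|.
  by exists (- lm); rewrite ?normrN // !inE eqxx !orbT.
by exists (- lp); rewrite ?normrN // !inE eqxx orbT.
Qed.

Lemma pencil_disc_gt0 x : m < `|x| ->
  0 < arrow_disc (beta0 - x * alpha0) (beta1 - x * alpha1) (b - x *: a).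
Proof.
move=> m_lt; rewrite (pencil_disc_factor _ _ sqrt_DeltaE) // -mulrA.
rewrite mulr_gt0 ?pencil_denE ?opprK //.
by apply: mul_addr_gt0; apply: le_lt_trans m_lt; rewrite !le_max lexx !orbT.
Qed.

(* For mu > m, both mu A - B and mu A + B are positive semidefinite. *)
Lemma pencil_ratio_le z : z != 0 -> `|qform B z| / qform A z <= m.
Proof.
move=> z_neq0; have qA_gt0 := A_posdef.2 z z_neq0.
apply/ler_addgt0Pr => e e_gt0; rewrite ler_pdivrMr //.
have sign x : m < `|x| -> 0 <= (beta0 - x * alpha0) * (qform B z - x * qform A z).
  by move=> /pencil_disc_gt0/ltW/(qform_arrowmx_sign z); rewrite -arrowmxBZ qformBZ.
have m_ge0 : 0 <= m by rewrite le_max (divr_ge0 (normr_ge0 _) (ltW alpha0_gt0)).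
have m_lt : m < m + e by rewrite ltrDl.
have m_lt_norm : m < `|m + e| by rewrite [`|m + e|]ger0_norm //; lra.
have beta0_lt : `|beta0| < (m + e) * alpha0.
  by rewrite -ltr_pdivrMr // (le_lt_trans _ m_lt) // le_max lexx.
have /andP[beta0_ge beta0_le] : - `|beta0| <= beta0 <= `|beta0| by rewrite -ler_norml.
have := sign (- (m + e)); rewrite normrN mulNr opprK => /(_ m_lt_norm).
rewrite pmulr_rge0; last lra.
have := sign _ m_lt_norm; rewrite nmulr_rge0; last lra.
rewrite ler_norml; lra.
Qed.

Lemma pencil_ratio_attained : exists2 z, z != 0 & `|qform B z| / qform A z = m.
Proof.
have [r] := pencil_roots_norm_max.
rewrite -(pencil_singular den_neq0 (lt0r_neq0 alpha0_gt0) d_ge2 _ sqrt_DeltaE).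
move=> /unitmxPn[u u_neq0 uBA] r_norm; exists u^T; first by rewrite trmx_eq0.
have /A_posdef.2 qA_gt0 : u^T != 0 by rewrite trmx_eq0.
have : qform (B - r *: A) u^T = 0 by rewrite /qform trmxK uBA mul0mx mxE.
rewrite qformBZ => /eqP; rewrite subr_eq0 => /eqP ->.
by rewrite normrM (gtr0_norm qA_gt0) mulfK ?lt0r_neq0.
Qed.

Lemma pencil_eigenvalue S (l : R[i]) : is_spd_sqrt A S ->
  eigenvalue (map_mx (real_complex R) (invmx S *m B *m invmx S)) l =
  (l \in map (real_complex R) roots).
Proof.
case=> /posdef_unitmx S_unit SSE.
rewrite !map_mxM map_invmx eigenvalue_invmx_sandwich ?map_unitmx //.
rewrite -map_mxM SSE !map_arrowmx.
rewrite (pencil_singular _ _ d_ge2 (s := (Num.sqrt Delta)%:C%C)).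
- by rewrite -rmorphN !pencil_root_map -fmorph_div -!rmorphN.
- by rewrite pencil_den_map fmorph_eq0.
- by rewrite fmorph_eq0 lt0r_neq0.
- by rewrite -rmorphXn sqrt_DeltaE pencil_Delta_map.
Qed.

Lemma pencil_spectral_radius S :
  is_spd_sqrt A S -> is_spectral_radius (invmx S *m B *m invmx S) m.
Proof.
move=> S_sqrt; rewrite /is_spectral_radius.
set M := invmx S *m B *m invmx S.
rewrite (_ : map_mx _ M = map_mx (real_complex R) M) // {}/M.
split=> [|l]; last first.
  by rewrite pencil_eigenvalue // => /mapP[r /pencil_roots_norm_le r_le ->]; rewrite normC_real lecR.
have [r r_root r_norm] := pencil_roots_norm_max.
by exists (r%:C)%C; rewrite ?pencil_eigenvalue ?map_f // normC_real r_norm.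
Qed.

End RealPencil.

Unset Implicit Arguments.

Theorem mainTheorem1 (R : rcfType) (d : nat) (hd : (2 <= d)%N)
  (alpha0 alpha1 beta0 beta1 : R) (a b : 'cV[R]_d) :
  posdef (blockM alpha0 alpha1 a) ->
  let A := blockM alpha0 alpha1 a in
  let B := blockM beta0 beta1 b in
  let Delta := (4 * dotv a b - (beta1 * alpha0 + beta0 * alpha1)) ^+ 2
     - 4 * (2 * dotv a a - alpha0 * alpha1) * (2 * dotv b b - beta0 * beta1) in
  let den := 4 * dotv a a - 2 * alpha0 * alpha1 in
  let lp := ((- 4 * dotv a b + (beta1 * alpha0 + beta0 * alpha1))
              + Num.sqrt Delta) / den in
  let lm := ((- 4 * dotv a b + (beta1 * alpha0 + beta0 * alpha1))
              - Num.sqrt Delta) / den in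
  let m := Num.max (`|beta0| / alpha0) (Num.max `|lp| `|lm|) in
  [/\ 0 <= Delta, den != 0,
      is_max_ratio A B m,
      exists S, is_spd_sqrt A S &
      forall S, is_spd_sqrt A S ->
        is_spectral_radius (invmx S *m B *m invmx S) m].
Proof.
move=> A_posdef A B Delta den lp lm m.
have [alpha0_gt0 disc_gt0] := posdef_arrowmx (ltnW hd) A_posdef.
split.
- exact: pencil_Delta_ge0.
- have : pencil_den alpha0 alpha1 a != 0 by rewrite pencil_denE oppr_eq0 lt0r_neq0.
  exact.
- split; [exact: pencil_ratio_attained | exact: pencil_ratio_le].
- exact: arrowmx_spd_sqrt.
- exact: pencil_spectral_radius.
Qed.
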